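(* Let $(U,d)$ be an asymmetric pseudometric space, $k\ge 2$ an integer, $R>0$, and let $U'$ be the output of Cluster$(U,d,R)$. Let $G$ be the digraph on vertex set $U'$ with an arc $ij$ ($i\ne j$) iff $d(i,j)<\frac{R}{2k}$. Then every directed cycle in $G$ has at least $2k+2$ distinct vertices.
   Context: An asymmetric pseudometric space $(U,d)$ is a finite set $U$ with $d:U\times U\to\mathbb{R}_{\ge 0}$ such that $d(u,u)=0$ and $d(u,v)\le d(u,w)+d(w,v)$ for all $u,v,w\in U$ ($d$ need not be symmetric). $d_{\max}(u,v)=\max\{d(u,v),d(v,u)\}$. Cluster$(U,d,R)$: initially all points are unmarked; while an unmarked point exists, choose any unmarked point $c$, let $A=\{v\in U\text{ unmarked}: d_{\max}(c,v)<R\}$, mark all points of $A$, and add $c$ to the output set $U'$. It returns $U'$. *)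

From HB Require Import structures.
From mathcomp Require Import all_boot all_order all_algebra.
Set Implicit Arguments. Unset Strict Implicit. Unset Printing Implicit Defensive.
Import Order.TTheory GRing.Theory Num.Theory.
Local Open Scope ring_scope.

Section Cluster.
Variables (F : realFieldType) (T : finType).

Definition asym_pseudometric (d : T -> T -> F) : Prop :=
  [/\ forall u v, 0 <= d u v,
      forall u, d u u = 0 &
      forall u v w, d u v <= d u w + d w v].

Definition dmax (d : T -> T -> F) (u v : T) : F := Num.max (d u v) (d v u).

(* Execution of Cluster(U,d,R): the state is (set of marked points,
   output list so far); [cluster_from d R marked out res] means that the
   algorithm, started in this state, can terminate with final output [res]
   (the choice of the unmarked point c is arbitrary). *)
Inductive cluster_from (d : T -> T -> F) (R : F) :
    {set T} -> seq T -> seq T -> Prop :=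
| cluster_done (marked : {set T}) (out : seq T) :
    (forall v, v \in marked) -> cluster_from d R marked out out
| cluster_step (marked : {set T}) (out : seq T) (c : T) (res : seq T) :
    c \notin marked ->
    cluster_from d R
      (marked :|: [set v | (v \notin marked) && (dmax d c v < R)])
      (rcons out c) res ->
    cluster_from d R marked out res.

Definition cluster_output (d : T -> T -> F) (R : F) (U' : seq T) : Prop :=
  cluster_from d R set0 [::] U'.

Definition G_arc (d : T -> T -> F) (R : F) (k : nat) (U' : seq T) : rel T :=
  fun i j => [&& i \in U', j \in U', i != j & d i j < R / (2 * k)%:R].

End Cluster.

From mathcomp Require Import all_boot all_order all_algebra.
Import Order.TTheory GRing.Theory Num.Theory.
Set Implicit Arguments. Unset Strict Implicit.
Local Open Scope ring_scope.

(* Every point Cluster outputs was unmarked when chosen, hence outside the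
   open dmax-balls of radius R around the earlier centres: the centres are
   pairwise R-separated for dmax.  On a directed cycle x -> y -> ... -> x
   with m vertices, d(x,y) < R/2k and, by the triangle inequality along the
   other m - 1 arcs, d(y,x) < (m-1) R/2k.  If m <= 2k+1 both are < R, so
   dmax(x,y) < R, contradicting separation. *)

Section ClusterSeparation.
Variables (F : realFieldType) (T : finType) (d : T -> T -> F) (R : F).

Definition dmax_separated (s : seq T) : Prop :=
  {in s &, forall i j, i != j -> R <= dmax d i j}.

Definition marks_balls (marked : {set T}) (out : seq T) : Prop :=
  forall x v, x \in out -> dmax d x v < R -> v \in marked.

Lemma dmaxC u v : dmax d u v = dmax d v u.
Proof. by rewrite /dmax maxC. Qed.

Lemma cluster_from_separated marked out res :
  cluster_from d R marked out res ->
  marks_balls marked out -> dmax_separated out -> dmax_separated res.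
Proof.
elim=> {marked out res} [//|marked out c res c_unmarked _ IH] balls sep.
apply: IH.
- move=> x v; rewrite mem_rcons !inE => /predU1P[->|x_out] xv.
    by case: (v \in marked) => //=; rewrite xv.
  by rewrite (balls x v x_out xv).
- have far_c x : x \in out -> R <= dmax d x c.
    move=> x_out; rewrite leNgt; apply: contra c_unmarked; exact: balls.
  move=> i j; rewrite !mem_rcons !inE.
  case/predU1P=> [->|i_out]; case/predU1P=> [->|j_out] //; first by rewrite eqxx.
  + by move=> _; rewrite dmaxC; exact: far_c.
  + by move=> _; exact: far_c.
  + exact: sep.
Qed.

Lemma cluster_output_separated U' : cluster_output d R U' -> dmax_separated U'.
Proof. by move/cluster_from_separated; apply. Qed.

End ClusterSeparation.

Section ShortArcs.
Variables (F : realFieldType) (T : finType) (d : T -> T -> F).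
Hypothesis d_ge0 : forall u v, 0 <= d u v.
Hypothesis d_triangle : forall u v w, d u v <= d u w + d w v.
Variables (e : rel T) (r : F).
Hypothesis e_short : forall x y, e x y -> d x y < r.

Lemma path_dist_lt a p :
  path e a p -> p != [::] -> d a (last a p) < (size p)%:R * r.
Proof.
elim: p a => [//|b p IH] a /= /andP[/e_short dab path_b] _.
case: p => [|c p] in IH path_b *; first by rewrite mul1r.
have dbc := IH b path_b isT.
rewrite -addn1 natrD mulrDl mul1r addrC.
exact: le_lt_trans (d_triangle a _ b) (ltrD dab dbc).
Qed.

Lemma cycle_dmax_lt x y t :
  cycle e [:: x, y & t] -> dmax d x y < (size t).+1%:R * r.
Proof.
rewrite /= => /andP[/e_short dxy /path_dist_lt dyx].
rewrite last_rcons size_rcons -size_eq0 size_rcons in dyx.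
have r_gt0 : 0 < r := le_lt_trans (d_ge0 x y) dxy.
rewrite /dmax gt_max dyx // andbT (lt_le_trans dxy) //.
by rewrite ler_pMl // ler1n.
Qed.

End ShortArcs.

Theorem lemma5p4 (F : realFieldType) (T : finType) (d : T -> T -> F)
    (k : nat) (R : F) (U' : seq T) :
  asym_pseudometric d -> (2 <= k)%N -> 0 < R ->
  cluster_output d R U' ->
  forall s : seq T, s != [::] -> uniq s -> {subset s <= U'} ->
    cycle (G_arc d R k U') s -> (2 * k + 2 <= size s)%N.
Proof.
move=> [d_ge0 _ d_triangle] k_ge2 R_gt0 /cluster_output_separated sep.
set r := R / (2 * k)%:R.
have arc_short x y : G_arc d R k U' x y -> d x y < r by case/and4P.
case=> [//|x [|y t]] _ _ _; first by rewrite /= /G_arc eqxx !andbF.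
move=> cyc; have /and4P[xU yU xy _] : G_arc d R k U' x y by case/andP: cyc.
have dmax_lt := cycle_dmax_lt d_ge0 d_triangle arc_short cyc.
rewrite leqNgt; apply/negP => /= short.
have len_le : ((size t).+1 <= 2 * k)%N by rewrite -(leq_add2r 2) addn2.
have two_k_gt0 : (0 : F) < (2 * k)%:R by rewrite ltr0n muln_gt0 (ltnW k_ge2).
have r_ge0 : 0 <= r by rewrite divr_ge0 ?ltW.
have two_k_r : (2 * k)%:R * r = R by rewrite mulrC divfK ?lt0r_neq0.
have : dmax d x y < R.
  by rewrite -two_k_r (lt_le_trans dmax_lt) // ler_wpM2r ?ler_nat.
by rewrite ltNge sep.
Qed.
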